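(* Let $B \in M_m\otimes M_n$ be (real) symmetric and define $X = (B + B^\Gamma)/2$. Then \[ \mu_{\min}(B) = \mu_{\min}(X) = \mu^{\mathbb{C}}_{\min}(X) \quad\text{and}\quad \mu_{\max}(B) = \mu_{\max}(X) = \mu^{\mathbb{C}}_{\max}(X). \]
   Context: $M_n$ denotes real $n\times n$ matrices and $M_m\otimes M_n$ is identified with $M_{mn}$ via the Kronecker product. For $A = \sum_j X_j \otimes Y_j \in M_m\otimes M_n$, the partial transpose is $A^\Gamma = \sum_j X_j \otimes Y_j^T$. For $B \in M_m\otimes M_n$, $\mu_{\min}(B) = \min\{(\mathbf{v}\otimes\mathbf{w})^T B(\mathbf{v}\otimes\mathbf{w}) : \mathbf{v}\in\mathbb{R}^m,\mathbf{w}\in\mathbb{R}^n, \|\mathbf{v}\|=\|\mathbf{w}\|=1\}$ and $\mu_{\max}(B)$ is the corresponding maximum; $\mu^{\mathbb{C}}_{\min}(B)$ and $\mu^{\mathbb{C}}_{\max}(B)$ are defined in the same way but with $\mathbf{v}\in\mathbb{C}^m$, $\mathbf{w}\in\mathbb{C}^n$ and $(\mathbf{v}\otimes\mathbf{w})^*B(\mathbf{v}\otimes\mathbf{w})$ in place of the real quadratic form. *)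

From mathcomp Require Import all_boot all_order all_algebra.
From mathcomp Require Import classical_sets reals.
From mathcomp.real_closed Require Import complex mxtens.
Set Implicit Arguments. Unset Strict Implicit. Unset Printing Implicit Defensive.
Import Order.TTheory GRing.Theory Num.Theory.
Local Open Scope ring_scope.
Local Open Scope classical_set_scope.

(* M_m (x) M_n is identified with M_{mn} via the Kronecker product [A *t B]
   of mxtens, row/column index (i,k) <-> mxtens_index (i,k). *)

(* Partial transpose: for A = sum_j X_j (x) Y_j, A^Gamma = sum_j X_j (x) Y_j^T.
   Entrywise: A^Gamma_{(i,k),(j,l)} = A_{(i,l),(j,k)}. *)
Definition ptrans {K : Type} (m n : nat) (A : 'M[K]_(m * n)) : 'M[K]_(m * n) :=
  \matrix_(a, b)
    A (mxtens_index ((mxtens_unindex a).1, (mxtens_unindex b).2))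
      (mxtens_index ((mxtens_unindex b).1, (mxtens_unindex a).2)).

Definition unit_rvec (R : realType) (m : nat) (v : 'cV[R]_m) : Prop :=
  \sum_(i < m) v i 0 ^+ 2 = 1.
Definition unit_cvec (R : realType) (m : nat) (v : 'cV[R[i]]_m) : Prop :=
  \sum_(i < m) `|v i 0| ^+ 2 = 1.

Definition prod_vals (R : realType) (m n : nat) (B : 'M[R]_(m * n)) : set R :=
  [set q | exists (v : 'cV[R]_m) (w : 'cV[R]_n),
      unit_rvec v /\ unit_rvec w /\ ((v *t w)^T *m B *m (v *t w)) 0 0 = q].

(* The values (v (x) w)^* B (v (x) w) over complex unit v, w (these are real
   for real symmetric B; we collect the real numbers q with q%:C equal to it). *)
Definition cprod_vals (R : realType) (m n : nat) (B : 'M[R]_(m * n)) : set R :=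
  [set q | exists (v : 'cV[R[i]]_m) (w : 'cV[R[i]]_n),
      unit_cvec v /\ unit_cvec w /\
      ((map_mx Num.conj (v *t w))^T *m map_mx (fun x : R => (x%:C)%C) B *m (v *t w)) 0 0
        = (q%:C)%C].

Definition mu_min (R : realType) (m n : nat) (B : 'M[R]_(m * n)) : R :=
  inf (prod_vals B).
Definition mu_max (R : realType) (m n : nat) (B : 'M[R]_(m * n)) : R :=
  sup (prod_vals B).
Definition cmu_min (R : realType) (m n : nat) (B : 'M[R]_(m * n)) : R :=
  inf (cprod_vals B).
Definition cmu_max (R : realType) (m n : nat) (B : 'M[R]_(m * n)) : R :=
  sup (cprod_vals B).

From mathcomp Require Import all_boot all_order all_algebra.
From mathcomp Require Import boolp classical_sets reals.
From mathcomp.real_closed Require Import complex mxtens.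
From mathcomp Require Import ring.
Set Implicit Arguments. Unset Strict Implicit. Unset Printing Implicit Defensive.
Import Order.TTheory GRing.Theory Num.Theory.
Local Open Scope ring_scope.

(** The partial transpose exchanges [c] and [d], so [X = (B + B^Gamma)/2] is
  invariant under [Gamma], agrees with [B] on product vectors, and its
  bilinear values are symmetric in [c, d].  For complex [v = a + ib] and
  [w = c + id] this symmetry kills every cross term of
  [(v (x) w)^* X (v (x) w)], leaving the sum of the four real values at
  [(a, c), (b, d), (a, d), (b, c)].  Their weights
  [|a|^2 |c|^2, |b|^2 |d|^2, |a|^2 |d|^2, |b|^2 |c|^2] add up to [1], so
  every complex value is a convex combination of real product values and
  the real and complex extrema coincide. *)

Section TensorForm.
Variables (K : comPzRingType) (m n : nat).
Local Notation idx := (@mxtens_index m n).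
Implicit Types X Y : 'M[K]_(m * n).

Definition tform (X : 'M[K]_(m * n)) (a b : 'cV[K]_m) (c d : 'cV[K]_n) : K :=
  ((a *t c)^T *m X *m (b *t d)) 0 0.

Lemma tformD X Y a b c d :
  tform (X + Y) a b c d = tform X a b c d + tform Y a b c d.
Proof. by rewrite /tform mulmxDr mulmxDl [in LHS]mxE. Qed.

Lemma tformZ r X a b c d : tform (r *: X) a b c d = r * tform X a b c d.
Proof. by rewrite /tform -scalemxAr -scalemxAl [in LHS]mxE. Qed.

Lemma tformN X a b c d : tform (- X) a b c d = - tform X a b c d.
Proof. by rewrite /tform mulmxN mulNmx mxE. Qed.

Lemma sum_mxtens_index (F : 'I_(m * n) -> K) : \sum_k F k = \sum_e F (idx e).
Proof.
by apply: reindex; exists (@mxtens_unindex m n) => e _;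
  rewrite (mxtens_indexK, mxtens_unindexK).
Qed.

Lemma tformE X a b c d :
  tform X a b c d = \sum_(p : ('I_m * 'I_n) * ('I_m * 'I_n))
    a p.1.1 0 * c p.1.2 0 * X (idx p.1) (idx p.2) * (b p.2.1 0 * d p.2.2 0).
Proof.
rewrite /tform mxE; under eq_bigr => k _ do rewrite mxE mulr_suml.
rewrite exchange_big sum_mxtens_index.
under eq_bigr => i _ do rewrite sum_mxtens_index.
rewrite pair_big; apply: eq_bigr => -[i j] _.
by rewrite !mxE !mxtens_indexK !ord1.
Qed.

Lemma ptransK : involutive (@ptrans K m n).
Proof.
move=> X; apply/matrixP => i j.
case: (mxtens_indexP i) => i1 i2; case: (mxtens_indexP j) => j1 j2.
by rewrite !mxE !mxtens_indexK.
Qed.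

Lemma ptransD X Y : ptrans (X + Y) = ptrans X + ptrans Y.
Proof. by apply/matrixP => i j; rewrite !mxE. Qed.

Lemma ptransZ r X : ptrans (r *: X) = r *: ptrans X.
Proof. by apply/matrixP => i j; rewrite !mxE. Qed.

Lemma tform_ptrans X a b c d : tform (ptrans X) a b c d = tform X a b d c.
Proof.
pose swap (p : ('I_m * 'I_n) * ('I_m * 'I_n)) := ((p.1.1, p.2.2), (p.2.1, p.1.2)).
have swapK : involutive swap by case=> [[? ?] [? ?]].
rewrite !tformE (reindex_inj (inv_inj swapK)).
apply: eq_bigr => -[[i k] [j l]] _ /=; rewrite mxE !mxtens_indexK /=; ring.
Qed.

Lemma tform_scale X s t a c :
  tform X (s *: a) (s *: a) (t *: c) (t *: c) = s ^+ 2 * t ^+ 2 * tform X a a c c.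
Proof. by rewrite !tformE mulr_sumr; apply: eq_bigr => p _; rewrite !mxE; ring. Qed.

End TensorForm.

Lemma map_tform (K L : comPzRingType) (f : {rmorphism K -> L}) m n
    (X : 'M[K]_(m * n)) a b c d :
  f (tform X a b c d) =
  tform (map_mx f X) (map_mx f a) (map_mx f b) (map_mx f c) (map_mx f d).
Proof.
by rewrite !tformE rmorph_sum; apply: eq_bigr => p _; rewrite !mxE !rmorphM.
Qed.

Section RealValues.
Variable R : realType.

Definition sqnorm k (a : 'cV[R]_k) : R := \sum_i a i 0 ^+ 2.

Lemma sqnorm_ge0 k (a : 'cV[R]_k) : 0 <= sqnorm a.
Proof. by apply: sumr_ge0 => i _; apply: sqr_ge0. Qed.

Lemma sqnorm_eq0 k (a : 'cV[R]_k) : sqnorm a = 0 -> a = 0.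
Proof.
move=> a0; apply/matrixP => i j; rewrite ord1 mxE.
have /eqP := @psumr_eq0P _ _ predT _ (fun j _ => sqr_ge0 (a j 0)) a0 i isT.
by rewrite sqrf_eq0 => /eqP.
Qed.

Lemma sqnorm0 k : sqnorm (0 : 'cV[R]_k) = 0.
Proof. by rewrite /sqnorm big1 // => i _; rewrite mxE expr0n. Qed.

Lemma unit_rvec_normalize k (a : 'cV[R]_k) : sqnorm a != 0 ->
  exists s (x : 'cV[R]_k), [/\ unit_rvec x, a = s *: x & s ^+ 2 = sqnorm a].
Proof.
move=> a_neq0; have a_gt0 : 0 < sqnorm a by rewrite lt_def a_neq0 sqnorm_ge0.
have s2E : Num.sqrt (sqnorm a) ^+ 2 = sqnorm a by rewrite sqr_sqrtr // ltW.
have s_neq0 : Num.sqrt (sqnorm a) != 0 by rewrite sqrtr_eq0 -ltNge.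
exists (Num.sqrt (sqnorm a)), ((Num.sqrt (sqnorm a))^-1 *: a); split => //.
- rewrite /unit_rvec; under eq_bigr do rewrite mxE exprMn.
  by rewrite -mulr_sumr -/(sqnorm a) -[X in _ * X]s2E exprVn mulVf // expf_neq0.
- by rewrite scalerA divff // scale1r.
Qed.

Variables m n : nat.
Implicit Types X : 'M[R]_(m * n).

Lemma tform_ge_sqnorm X mu :
    (forall x y, unit_rvec x -> unit_rvec y -> mu <= tform X x x y y) ->
  forall a c, mu * (sqnorm a * sqnorm c) <= tform X a a c c.
Proof.
move=> lbX a c; have [/sqnorm_eq0 ->|a_neq0] := eqVneq (sqnorm a) 0.
  by rewrite /tform tens0mx trmx0 !mul0mx mxE sqnorm0 mul0r mulr0.
have [/sqnorm_eq0 ->|c_neq0] := eqVneq (sqnorm c) 0.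
  by rewrite /tform tensmx0 trmx0 !mul0mx mxE sqnorm0 !mulr0.
have [s [x [x1 -> <-]]] := unit_rvec_normalize a_neq0.
have [t [y [y1 -> <-]]] := unit_rvec_normalize c_neq0.
rewrite tform_scale mulrC; apply: ler_wpM2l; last exact: lbX.
by rewrite mulr_ge0 ?sqr_ge0.
Qed.

Lemma tform_le_sqnorm X mu :
    (forall x y, unit_rvec x -> unit_rvec y -> tform X x x y y <= mu) ->
  forall a c, tform X a a c c <= mu * (sqnorm a * sqnorm c).
Proof.
move=> ubX a c; rewrite -lerN2 -mulNr -tformN.
by apply: tform_ge_sqnorm => x y x1 y1; rewrite tformN lerN2; apply: ubX.
Qed.

Lemma unit_rvec_le1 k (x : 'cV[R]_k) i : unit_rvec x -> `|x i 0| <= 1.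
Proof.
move=> x1; rewrite -(@ler_pXn2r _ 2) ?nnegrE // expr1n real_normK ?num_real //.
by rewrite -x1 (bigD1 i) //= lerDl sumr_ge0 // => j _; apply: sqr_ge0.
Qed.

Lemma prod_vals_bounded X : has_lbound (prod_vals X) /\ has_ubound (prod_vals X).
Proof.
pose M := \sum_(p : ('I_m * 'I_n) * ('I_m * 'I_n))
  `|X (mxtens_index p.1) (mxtens_index p.2)|.
suff bnd q : prod_vals X q -> `|q| <= M.
  by split; [exists (- M) | exists M] => q /bnd; rewrite ler_norml => /andP[].
case=> x [y [x1 [y1 <-]]]; rewrite -/(tform X x x y y) tformE.
apply: le_trans (ler_norm_sum _ _ _) _; apply: ler_sum => p _.
rewrite !normrM -[leRHS]mul1r -[leRHS]mulr1 -[1]mulr1.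
by rewrite !ler_pM ?mulr_ge0 ?unit_rvec_le1.
Qed.

Local Notation Re_mx := (map_mx (@complex.Re R)).
Local Notation Im_mx := (map_mx (@complex.Im R)).
Local Notation C_mx := (map_mx (fun x : R => (x%:C)%C)).

Lemma Re_tform_conj X (v : 'cV[R[i]]_m) (w : 'cV[R[i]]_n) :
  let a := Re_mx v in let b := Im_mx v in let c := Re_mx w in let d := Im_mx w in
  complex.Re (tform (C_mx X) (map_mx Num.conj v) v (map_mx Num.conj w) w) =
  tform X a a c c + tform X b b d d + tform X a a d d + tform X b b c c
  + (tform X a b d c - tform X a b c d) + (tform X b a c d - tform X b a d c).
Proof.
move=> a b c d; rewrite tformE (@raddf_sum _ _ (@complex.Re R : Rcomplex R -> R)).
rewrite !tformE -!sumrB -!big_split /=; apply: eq_bigr => p _; rewrite !mxE.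
move: (v p.1.1 0) (w p.1.2 0) (X _ _) (v p.2.1 0) (w p.2.2 0).
by move=> -[a1 b1] [a2 b2] x [a3 b3] [a4 b4] /=; ring.
Qed.

Lemma sqnorm_Re_Im k (v : 'cV[R[i]]_k) :
  unit_cvec v -> sqnorm (Re_mx v) + sqnorm (Im_mx v) = 1.
Proof.
move=> v1; suff /(congr1 (@complex.Re R)) :
  ((sqnorm (Re_mx v) + sqnorm (Im_mx v))%:C)%C = 1 by [].
rewrite -v1 -big_split rmorph_sum; apply: eq_bigr => j _.
by rewrite !mxE; apply: add_Re2_Im2.
Qed.

Lemma unit_cvec_real k (v : 'cV[R]_k) : unit_rvec v -> unit_cvec (C_mx v).
Proof.
move=> v1; rewrite /unit_cvec -[1]/(((1 : R)%:C)%C) -v1 rmorph_sum.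
by apply: eq_bigr => j _; rewrite mxE -add_Re2_Im2 /= expr0n addr0.
Qed.

Lemma unit_rvec_exists k (v : 'cV[R[i]]_k) :
  unit_cvec v -> exists x : 'cV[R]_k, unit_rvec x.
Proof.
move/sqnorm_Re_Im => norm1.
suff [y y_neq0] : exists y : 'cV[R]_k, sqnorm y != 0.
  by have [s [x [x1 _ _]]] := unit_rvec_normalize y_neq0; exists x.
have [re0|] := eqVneq (sqnorm (Re_mx v)) 0; last by exists (Re_mx v).
by exists (Im_mx v); move: norm1; rewrite re0 add0r => ->; apply: oner_neq0.
Qed.

Lemma prod_vals_sub_cprod_vals X : (prod_vals X `<=` cprod_vals X)%classic.
Proof.
move=> q [v [w [v1 [w1 <-]]]]; exists (C_mx v), (C_mx w).
do 2 (split; first exact: unit_cvec_real).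
rewrite -/(tform X v v w w) (map_tform (real_complex R)) /tform -map_mxT.
suff -> : map_mx Num.conj (C_mx (v *t w)) = C_mx (v *t w) by [].
by apply/matrixP => i j; rewrite !mxE; apply: conjc_real.
Qed.

Lemma cprod_vals_decomp X q : ptrans X = X -> cprod_vals X q ->
  exists a b (c d : 'cV[R]_n),
  [/\ q = tform X a a c c + tform X b b d d + tform X a a d d + tform X b b c c,
      sqnorm a + sqnorm b = 1 & sqnorm c + sqnorm d = 1].
Proof.
move=> XK [v [w [v1 [w1 vwq]]]].
have tform_sym a b c d : tform X a b c d = tform X a b d c.
  by rewrite -{1}XK tform_ptrans.
exists (Re_mx v), (Im_mx v), (Re_mx w), (Im_mx w); split; try exact: sqnorm_Re_Im.
rewrite -[q]/(complex.Re (q%:C)%C) -vwq map_mxT Re_tform_conj.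
by rewrite (tform_sym _ _ (Im_mx w)) (tform_sym (Im_mx v) _ (Re_mx w)) !subrr !addr0.
Qed.

Lemma cprod_vals_between X lo hi : ptrans X = X ->
    (forall x y, unit_rvec x -> unit_rvec y -> lo <= tform X x x y y <= hi) ->
  forall q, cprod_vals X q -> lo <= q <= hi.
Proof.
move=> XK bnd q /(cprod_vals_decomp XK) [a [b [c [d [-> ab1 cd1]]]]].
have [lbX ubX] : (forall x y, unit_rvec x -> unit_rvec y -> lo <= tform X x x y y)
              /\ (forall x y, unit_rvec x -> unit_rvec y -> tform X x x y y <= hi).
  by split=> x y x1 y1; case/andP: (bnd x y x1 y1).
have weights1 : sqnorm a * sqnorm c + sqnorm b * sqnorm d
              + sqnorm a * sqnorm d + sqnorm b * sqnorm c = 1.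
  by rewrite -[1]mulr1 -{1}ab1 -cd1; ring.
rewrite -[lo]mulr1 -[hi]mulr1 -weights1 !mulrDr; apply/andP; split.
- by apply: lerD; [apply: lerD; [apply: lerD|]|]; apply: tform_ge_sqnorm.
- by apply: lerD; [apply: lerD; [apply: lerD|]|]; apply: tform_le_sqnorm.
Qed.

Lemma eq_prod_vals X Y : (forall v w, tform X v v w w = tform Y v v w w) ->
  prod_vals X = prod_vals Y.
Proof.
move=> eqXY; apply/seteqP; split=> q [v [w [v1 [w1 <-]]]]; exists v, w;
  by do 2 split=> //; first [exact: eqXY | exact: esym (eqXY v w)].
Qed.

Lemma prod_vals_neq0 X :
  (cprod_vals X !=set0)%classic -> (prod_vals X !=set0)%classic.
Proof.
case=> _ [v [w [/unit_rvec_exists [x x1] [/unit_rvec_exists [y y1] _]]]].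
by exists (tform X x x y y), x, y.
Qed.

End RealValues.

Section InfSup.
Variables (R : realType) (P S : set R).
Hypotheses (PS : (P `<=` S)%classic) (SP : (S !=set0)%classic -> (P !=set0)%classic).

Let empty_sets : ~ (S !=set0)%classic -> S = set0 /\ P = set0.
Proof.
move=> S0; have S_0 : S = set0 by apply/seteqP; split=> // x Sx; apply: S0; exists x.
by split=> //; rewrite -subset0 -S_0.
Qed.

Lemma inf_eq_of_sub : has_lbound P -> (forall q, S q -> inf P <= q) -> inf S = inf P.
Proof.
move=> lbP infP_lbS; have [S_neq0|/empty_sets[-> ->] //] := pselect (S !=set0)%classic.
apply/eqP; rewrite eq_le; apply/andP; split; last exact: lb_le_inf.
apply: lb_le_inf (SP S_neq0) _ => q Pq; apply: ge_inf (PS Pq).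
by exists (inf P).
Qed.

Lemma sup_eq_of_sub : has_ubound P -> (forall q, S q -> q <= sup P) -> sup S = sup P.
Proof.
move=> ubP supP_ubS; have [S_neq0|/empty_sets[-> ->] //] := pselect (S !=set0)%classic.
apply/eqP; rewrite eq_le; apply/andP; split; first exact: ge_sup.
apply: ge_sup (SP S_neq0) _ => q Pq; apply: ub_le_sup (PS Pq).
by exists (sup P).
Qed.

End InfSup.

Theorem lemma5p1 (R : realType) (m n : nat) (B : 'M[R]_(m * n)) :
  B^T = B ->
  let X := 2^-1 *: (B + ptrans B) in
  (mu_min B = mu_min X /\ mu_min X = cmu_min X) /\
  (mu_max B = mu_max X /\ mu_max X = cmu_max X).
Proof.
move=> _ X.
have XK : ptrans X = X by rewrite /X ptransZ ptransD ptransK addrC.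
have XB : prod_vals X = prod_vals B.
  by apply: eq_prod_vals => v w; rewrite tformZ tformD tform_ptrans; field.
have [lbP ubP] := prod_vals_bounded X.
have bnd x y : unit_rvec x -> unit_rvec y ->
    inf (prod_vals X) <= tform X x x y y <= sup (prod_vals X).
  by move=> x1 y1; apply/andP; split; [apply: ge_inf | apply: ub_le_sup] => //;
    exists x, y.
have between := cprod_vals_between XK bnd.
have PS := @prod_vals_sub_cprod_vals _ _ _ X; have SP := @prod_vals_neq0 _ _ _ X.
rewrite /mu_min /mu_max /cmu_min /cmu_max -XB; split; split=> //; symmetry.
- by apply: inf_eq_of_sub PS SP lbP _ => q /between/andP[].
- by apply: sup_eq_of_sub PS SP ubP _ => q /between/andP[].
Qed.
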